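(* Let $A,B\in M_2(\mathbb{Z})$ be expanding matrices with characteristic polynomials $x^2+px+q$ and $x^2-px+q$ respectively ($p,q\in\mathbb{Z}$). Let $v,w\in\mathbb{R}^2$ be nonzero vectors such that $\{v,Av\}$ and $\{w,Bw\}$ are each linearly independent. Let $c_i,d_i\in\mathbb{Z}$ for $i=0,1,\dots,|q|-1$ be such that the points $c_iAv+d_iv$ are pairwise distinct, and put $\mathcal{D}=\{c_iAv+d_iv: i=0,\dots,|q|-1\}$ and $\mathcal{D}'=\{-c_iBw+d_iw: i=0,\dots,|q|-1\}$. Then $T(A,\mathcal{D})$ is connected if and only if $T(B,\mathcal{D}')$ is connected.
   Context: A real square matrix is expanding if all its eigenvalues have modulus strictly larger than $1$. For an expanding matrix $A\in M_n(\mathbb{Z})$ and a finite set $\mathcal{D}\subset\mathbb{R}^n$ with $|\mathcal D|=|\det A|$, the self-affine set $T(A,\mathcal{D})$ is the unique nonempty compact set $T$ with $AT=T+\mathcal{D}$; equivalently $T=\{\sum_{i=1}^\infty A^{-i}d_{j_i}: d_{j_i}\in\mathcal{D}\}$. *)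

From Stdlib Require Import Reals Lra ZArith.
Open Scope R_scope.

Definition vec : Type := (R * R)%type.
Definition vadd (u w : vec) : vec := (fst u + fst w, snd u + snd w).
Definition vscale (a : R) (u : vec) : vec := (a * fst u, a * snd u).
Definition vzero : vec := (0, 0).
Definition vdist (u w : vec) : R :=
  sqrt ((fst u - fst w) ^ 2 + (snd u - snd w) ^ 2).

Definition lin_indep2 (u w : vec) : Prop :=
  forall a b : R, vadd (vscale a u) (vscale b w) = vzero -> a = 0 /\ b = 0.

Record mat2 : Type := Mat2 { m11 : Z; m12 : Z; m21 : Z; m22 : Z }.

Definition mtrace (A : mat2) : Z := (m11 A + m22 A)%Z.
Definition mdet (A : mat2) : Z := (m11 A * m22 A - m12 A * m21 A)%Z.

Definition mapply (A : mat2) (u : vec) : vec :=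
  (IZR (m11 A) * fst u + IZR (m12 A) * snd u,
   IZR (m21 A) * fst u + IZR (m22 A) * snd u).

(** A^{-1} acting on R^2 (A^{-1} = adj A / det A; meaningful when det A <> 0) *)
Definition minv_apply (A : mat2) (u : vec) : vec :=
  let d := IZR (mdet A) in
  ((IZR (m22 A) * fst u - IZR (m12 A) * snd u) / d,
   (- IZR (m21 A) * fst u + IZR (m11 A) * snd u) / d).

Fixpoint minv_pow (A : mat2) (i : nat) (u : vec) : vec :=
  match i with
  | O => u
  | S k => minv_apply A (minv_pow A k u)
  end.

(** Characteristic polynomial of A is x^2 + p x + q, i.e. det(xI - A) = x^2 - tr(A) x + det(A). *)
Definition charpoly_is (A : mat2) (p q : Z) : Prop :=
  (- mtrace A = p)%Z /\ mdet A = q.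

(** Complex numbers as pairs (re, im) *)
Definition cmul (z w : R * R) : R * R :=
  (fst z * fst w - snd z * snd w, fst z * snd w + snd z * fst w).
Definition cnorm2 (z : R * R) : R := fst z ^ 2 + snd z ^ 2.

(** lam (complex) is an eigenvalue of A: there is a nonzero (x1, x2) in C^2
    with A (x1, x2) = lam (x1, x2). *)
Definition is_eigenvalue (A : mat2) (lam : R * R) : Prop :=
  exists x1 x2 : R * R,
    (x1 <> (0, 0) \/ x2 <> (0, 0)) /\
    (IZR (m11 A) * fst x1 + IZR (m12 A) * fst x2,
     IZR (m11 A) * snd x1 + IZR (m12 A) * snd x2) = cmul lam x1 /\
    (IZR (m21 A) * fst x1 + IZR (m22 A) * fst x2,
     IZR (m21 A) * snd x1 + IZR (m22 A) * snd x2) = cmul lam x2.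

Definition expanding (A : mat2) : Prop :=
  forall lam, is_eigenvalue A lam -> cnorm2 lam > 1.

Fixpoint partial_sum (A : mat2) (dig : nat -> vec) (n : nat) : vec :=
  match n with
  | O => vzero
  | S k => vadd (partial_sum A dig k) (minv_pow A (S k) (dig (S k)))
  end.

Definition self_affine (A : mat2) (D : vec -> Prop) : vec -> Prop :=
  fun x => exists dig : nat -> vec,
    (forall i, D (dig i)) /\
    Un_cv (fun n => fst (partial_sum A dig n)) (fst x) /\
    Un_cv (fun n => snd (partial_sum A dig n)) (snd x).

Definition open2 (U : vec -> Prop) : Prop :=
  forall x, U x -> exists eps, eps > 0 /\ forall y, vdist x y < eps -> U y.

Definition connected2 (S : vec -> Prop) : Prop :=
  ~ exists U V : vec -> Prop,
      open2 U /\ open2 V /\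
      (forall x, S x -> U x \/ V x) /\
      (exists x, S x /\ U x) /\ (exists x, S x /\ V x) /\
      (forall x, S x -> U x -> V x -> False).

From Stdlib Require Import Reals Lra Lia ZArith Classical ClassicalEpsilon.
Open Scope R_scope.

(* Put N = A^{-1} and N' = B^{-1}; then T(A, D) = { sum_{i>=1} N^i d_i : d_i in D } is the
   attractor of the linear contraction N with digit set D.  The proof has three parts.

   1. Hata's criterion, for an injective linear contraction N of R^2 and digits f 0 .. f (m-1):
      T is connected iff the graph on the digits with k ~ j when (f k + T) meets (f j + T)
      is connected.  If a closed class of digits is proper, the first digit splits T into two
      disjoint nonempty closed sets.  Conversely, by compactness the two parts of a
      disconnection of T are at positive distance, so small pieces of T lie in one part, and
      graph connectivity propagates this from deep pieces up to T itself.
   2. Transfer: if L is linear and L N = - N' L, then adjacency of digits for (N, f) implies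
      adjacency for (N', L o f); exchanging the odd-indexed digits of two expansions absorbs
      the signs (-1)^i.
   3. Matrices: in the basis (v, A v) an expanding A acts as the companion map of
      x^2 + p x + q, which expands some Euclidean norm, so A^{-1} is a contraction; the map L
      sending (v, A v) to (w, - B w) satisfies L A = - B L and maps D onto D'.
   The theorem is 1-3 applied in both directions.  (The digits need not be distinct.) *)

Definition vsub (u w : vec) : vec := (fst u - fst w, snd u - snd w).

(** The l1 norm: equivalent to the Euclidean one and convenient for estimates. *)
Definition norm1 (u : vec) : R := Rabs (fst u) + Rabs (snd u).

Lemma vec_eq (u w : vec) : fst u = fst w -> snd u = snd w -> u = w.
Proof. destruct u, w; simpl; intros; subst; reflexivity. Qed.

Lemma norm1_ge0 u : 0 <= norm1 u.
Proof. unfold norm1; pose proof (Rabs_pos (fst u)); pose proof (Rabs_pos (snd u)); lra. Qed.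

Lemma norm1_add u w : norm1 (vadd u w) <= norm1 u + norm1 w.
Proof.
  unfold norm1, vadd; simpl.
  pose proof (Rabs_triang (fst u) (fst w)); pose proof (Rabs_triang (snd u) (snd w)); lra.
Qed.

Lemma norm1_scale a u : norm1 (vscale a u) = Rabs a * norm1 u.
Proof. unfold norm1, vscale; simpl; rewrite !Rabs_mult; ring. Qed.

Lemma norm1_sub_le u w : norm1 (vsub u w) <= norm1 u + norm1 w.
Proof.
  unfold norm1, vsub; simpl.
  pose proof (Rabs_triang (fst u) (- fst w)); pose proof (Rabs_triang (snd u) (- snd w)).
  rewrite !Rabs_Ropp in *; unfold Rminus; lra.
Qed.

Lemma dist1_triangle u w z : norm1 (vsub u z) <= norm1 (vsub u w) + norm1 (vsub w z).
Proof.
  unfold norm1, vsub; simpl.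
  pose proof (Rabs_triang (fst u - fst w) (fst w - fst z)).
  pose proof (Rabs_triang (snd u - snd w) (snd w - snd z)).
  replace (fst u - fst w + (fst w - fst z)) with (fst u - fst z) in * by ring.
  replace (snd u - snd w + (snd w - snd z)) with (snd u - snd z) in * by ring. lra.
Qed.

Lemma dist1_sym u w : norm1 (vsub u w) = norm1 (vsub w u).
Proof.
  unfold norm1, vsub; simpl.
  rewrite (Rabs_minus_sym (fst u)), (Rabs_minus_sym (snd u)); ring.
Qed.

Lemma dist1_self u : norm1 (vsub u u) = 0.
Proof. unfold norm1, vsub; simpl; rewrite !Rminus_diag, Rabs_R0; ring. Qed.

Lemma dist1_zero u w : norm1 (vsub u w) <= 0 -> u = w.
Proof.
  unfold norm1, vsub; simpl; intro H.
  pose proof (Rabs_pos (fst u - fst w)); pose proof (Rabs_pos (snd u - snd w)).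
  apply vec_eq; apply Rminus_diag_uniq, NNPP; intro Hn; apply Rabs_pos_lt in Hn; lra.
Qed.

Lemma vdist_le_dist1 x y : vdist x y <= norm1 (vsub x y).
Proof.
  unfold vdist, norm1, vsub; cbn [fst snd].
  set (a := fst x - fst y); set (b := snd x - snd y).
  pose proof (Rabs_pos a); pose proof (Rabs_pos b).
  rewrite <- (sqrt_pow2 (Rabs a + Rabs b)) by lra.
  apply sqrt_le_1_alt. rewrite <- (pow2_abs a), <- (pow2_abs b). nra.
Qed.

Lemma dist1_le_vdist x y : norm1 (vsub x y) <= 2 * vdist x y.
Proof.
  assert (Habs : forall a b, Rabs a <= sqrt (a ^ 2 + b ^ 2)).
  { intros a b. rewrite <- sqrt_Rsqr_abs. apply sqrt_le_1_alt. unfold Rsqr. nra. }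
  unfold vdist, norm1, vsub; cbn [fst snd].
  pose proof (Habs (fst x - fst y) (snd x - snd y)).
  pose proof (Habs (snd x - snd y) (fst x - fst y)).
  rewrite Rplus_comm in H0. lra.
Qed.

Lemma le_of_le_plus_eps a b : (forall eps, 0 < eps -> a <= b + eps) -> a <= b.
Proof. intros H. apply Rnot_lt_le; intro. specialize (H ((a - b) / 2) ltac:(lra)). lra. Qed.

Definition converges_to (s : nat -> vec) (x : vec) : Prop :=
  forall eps, 0 < eps -> exists N, forall n, (N <= n)%nat -> norm1 (vsub (s n) x) < eps.

Lemma converges_to_iff s x :
  converges_to s x <->
  Un_cv (fun n => fst (s n)) (fst x) /\ Un_cv (fun n => snd (s n)) (snd x).
Proof.
  split.
  - intros H; split; intros eps He; destruct (H eps He) as [N HN]; exists N; intros n Hn;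
      specialize (HN n Hn); unfold norm1, vsub in HN; simpl in HN; unfold R_dist;
      pose proof (Rabs_pos (fst (s n) - fst x)); pose proof (Rabs_pos (snd (s n) - snd x)); lra.
  - intros [H1 H2] eps He.
    destruct (H1 (eps / 2)) as [N1 HN1]; [lra|]. destruct (H2 (eps / 2)) as [N2 HN2]; [lra|].
    exists (Nat.max N1 N2). intros n Hn. unfold norm1, vsub; simpl.
    specialize (HN1 n ltac:(lia)); specialize (HN2 n ltac:(lia)). unfold R_dist in *. lra.
Qed.

Lemma converges_unique s x y : converges_to s x -> converges_to s y -> x = y.
Proof.
  intros Hx Hy. apply dist1_zero, Rnot_lt_le; intro Hp.
  destruct (Hx _ (ltac:(lra) : 0 < norm1 (vsub x y) / 2)) as [N1 H1].
  destruct (Hy _ (ltac:(lra) : 0 < norm1 (vsub x y) / 2)) as [N2 H2].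
  specialize (H1 (Nat.max N1 N2) ltac:(lia)); specialize (H2 (Nat.max N1 N2) ltac:(lia)).
  pose proof (dist1_triangle x (s (Nat.max N1 N2)) y).
  rewrite (dist1_sym x (s _)) in H. lra.
Qed.

Lemma converges_shift s x : converges_to s x <-> converges_to (fun n => s (S n)) x.
Proof.
  split; intros H eps He; destruct (H eps He) as [N HN].
  - exists N; intros; apply HN; lia.
  - exists (S N); intros [|n] Hn; [lia|]. apply HN; lia.
Qed.

Lemma converges_ext s t x : (forall n, s n = t n) -> converges_to s x -> converges_to t x.
Proof. intros E H eps He; destruct (H eps He) as [N HN]; exists N; intros; rewrite <- E; auto. Qed.

Lemma converges_sub s t x y :
  converges_to s x -> converges_to t y -> converges_to (fun n => vsub (s n) (t n)) (vsub x y).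
Proof.
  intros Hs Ht eps He.
  destruct (Hs (eps / 2)) as [N1 H1]; [lra|]. destruct (Ht (eps / 2)) as [N2 H2]; [lra|].
  exists (Nat.max N1 N2); intros n Hn.
  specialize (H1 n ltac:(lia)); specialize (H2 n ltac:(lia)).
  replace (vsub (vsub (s n) (t n)) (vsub x y)) with (vsub (vsub (s n) x) (vsub (t n) y))
    by (apply vec_eq; simpl; ring).
  pose proof (norm1_sub_le (vsub (s n) x) (vsub (t n) y)). lra.
Qed.

Lemma converges_add_const c s x :
  converges_to s x -> converges_to (fun n => vadd c (s n)) (vadd c x).
Proof.
  intros H eps He; destruct (H eps He) as [N HN]; exists N; intros n Hn.
  replace (vsub (vadd c (s n)) (vadd c x)) with (vsub (s n) x) by (apply vec_eq; simpl; ring).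
  auto.
Qed.

Definition linear (N : vec -> vec) : Prop :=
  (forall u w, N (vadd u w) = vadd (N u) (N w)) /\
  (forall a u, N (vscale a u) = vscale a (N u)).

Fixpoint iterate (N : vec -> vec) (i : nat) (u : vec) : vec :=
  match i with O => u | S k => N (iterate N k u) end.

Lemma linear_sub N : linear N -> forall u w, N (vsub u w) = vsub (N u) (N w).
Proof.
  intros [Ha Hs] u w.
  replace (vsub u w) with (vadd u (vscale (-1) w)) by (apply vec_eq; simpl; ring).
  rewrite Ha, Hs; apply vec_eq; simpl; ring.
Qed.

Lemma linear_zero N : linear N -> N vzero = vzero.
Proof.
  intros [_ Hs]. replace vzero with (vscale 0 vzero) by (apply vec_eq; simpl; ring).
  rewrite Hs; apply vec_eq; simpl; ring.
Qed.

(** A linear map of [R^2] is determined by the images of the standard basis, hence bounded. *)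
Lemma linear_bounded N : linear N -> exists C, 0 <= C /\ forall u, norm1 (N u) <= C * norm1 u.
Proof.
  intros [Ha Hs]. exists (norm1 (N (1, 0)) + norm1 (N (0, 1))).
  pose proof (norm1_ge0 (N (1, 0))); pose proof (norm1_ge0 (N (0, 1))).
  split; [lra|]. intro u.
  replace u with (vadd (vscale (fst u) (1, 0)) (vscale (snd u) (0, 1)))
    at 1 by (apply vec_eq; simpl; ring).
  rewrite Ha, !Hs. eapply Rle_trans; [apply norm1_add|]. rewrite !norm1_scale.
  change (norm1 u) with (Rabs (fst u) + Rabs (snd u)).
  pose proof (Rabs_pos (fst u)); pose proof (Rabs_pos (snd u)). nra.
Qed.

Lemma linear_comp F G : linear F -> linear G -> linear (fun u => F (G u)).
Proof. intros [Fa Fs] [Ga Gs]; split; intros; rewrite ?Ga, ?Gs, ?Fa, ?Fs; reflexivity. Qed.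

Lemma iterate_linear N : linear N -> forall i, linear (iterate N i).
Proof.
  intros [Ha Hs] i; induction i as [|i [IHa IHs]]; split; intros; simpl; auto.
  - rewrite IHa; auto.
  - rewrite IHs; auto.
Qed.

Lemma iterate_comm N i u : iterate N i (N u) = N (iterate N i u).
Proof. induction i; simpl; congruence. Qed.

Lemma converges_linear N s x :
  linear N -> converges_to s x -> converges_to (fun n => N (s n)) (N x).
Proof.
  intros HN H eps He. destruct (linear_bounded N HN) as [C [HC HCb]].
  destruct (H (eps / (C + 1))) as [M HM]; [apply Rdiv_lt_0_compat; lra|].
  exists M; intros n Hn. rewrite <- linear_sub by auto.
  eapply Rle_lt_trans; [apply HCb|]. specialize (HM n Hn).
  apply Rmult_lt_compat_l with (r := C + 1) in HM; [|lra].
  replace ((C + 1) * (eps / (C + 1))) with eps in HM by (field; lra).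
  pose proof (norm1_ge0 (vsub (s n) x)); nra.
Qed.

Definition contraction (N : vec -> vec) (K r : R) : Prop :=
  0 < K /\ 0 < r < 1 /\ forall n u, norm1 (iterate N n u) <= K * r ^ n * norm1 u.

Fixpoint series (N : vec -> vec) (dig : nat -> vec) (n : nat) : vec :=
  match n with
  | O => vzero
  | S k => vadd (series N dig k) (iterate N (S k) (dig (S k)))
  end.

Lemma series_ext N d1 d2 n :
  (forall i, (1 <= i <= n)%nat -> d1 i = d2 i) -> series N d1 n = series N d2 n.
Proof.
  induction n; intros H; simpl; auto.
  rewrite IHn by (intros; apply H; lia). rewrite H by lia. reflexivity.
Qed.

Lemma series_peel N dig n :
  linear N -> series N dig (S n) = N (vadd (dig 1%nat) (series N (fun i => dig (S i)) n)).
Proof.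
  intros HN. pose proof HN as [Ha _]. induction n.
  - simpl. replace (vadd (dig 1%nat) vzero) with (dig 1%nat) by (apply vec_eq; simpl; ring).
    apply vec_eq; simpl; ring.
  - change (series N dig (S (S n)))
      with (vadd (series N dig (S n)) (N (iterate N (S n) (dig (S (S n)))))).
    rewrite IHn. simpl series. rewrite !Ha. apply vec_eq; simpl; ring.
Qed.

Lemma pow_le_pow_of_le_1 r m n : 0 <= r <= 1 -> (m <= n)%nat -> r ^ n <= r ^ m.
Proof.
  intros Hr Hmn. replace n with (m + (n - m))%nat by lia.
  rewrite pow_add. pose proof (pow_le r m ltac:(lra)).
  assert (r ^ (n - m) <= 1) by (rewrite <- (pow1 (n - m)); apply pow_incr; lra). nra.
Qed.

Lemma geometric_eventually_small r C eps :
  0 < r < 1 -> 0 < eps -> exists J, forall n, (J <= n)%nat -> C * r ^ n < eps.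
Proof.
  intros Hr He.
  destruct (pow_lt_1_zero r ltac:(rewrite Rabs_right; lra) (eps / (Rabs C + 1))) as [J HJ].
  { apply Rdiv_lt_0_compat; [lra | pose proof (Rabs_pos C); lra]. }
  exists J; intros n Hn. specialize (HJ n Hn).
  rewrite Rabs_right in HJ by (apply Rle_ge, pow_le; lra).
  pose proof (pow_le r n ltac:(lra)). pose proof (Rabs_pos C). pose proof (Rle_abs C).
  apply Rmult_lt_compat_l with (r := Rabs C + 1) in HJ; [|lra].
  replace ((Rabs C + 1) * (eps / (Rabs C + 1))) with eps in HJ by (field; lra). nra.
Qed.

Section ContractionSeries.

Variables (N : vec -> vec) (K r : R).
Hypothesis contr : contraction N K r.

Lemma series_tail dig Mb : (forall i, norm1 (dig i) <= Mb) ->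
  forall n k, norm1 (vsub (series N dig (n + k)) (series N dig n)) <= K * Mb * r / (1 - r) * r ^ n.
Proof.
  intros HM n. destruct contr as [HK [Hr Hc]].
  assert (HMb : 0 <= Mb) by (pose proof (HM O); pose proof (norm1_ge0 (dig O)); lra).
  assert (Geo : forall k, norm1 (vsub (series N dig (n + k)) (series N dig n))
                          <= K * Mb * r ^ (S n) * (1 - r ^ k) / (1 - r)).
  { induction k.
    - rewrite Nat.add_0_r, dist1_self. simpl. unfold Rdiv. rewrite Rminus_diag. lra.
    - rewrite Nat.add_succ_r. simpl series.
      replace (vsub (vadd (series N dig (n + k)) (N (iterate N (n + k) (dig (S (n + k))))))
                    (series N dig n))
        with (vadd (vsub (series N dig (n + k)) (series N dig n))
                   (iterate N (S (n + k)) (dig (S (n + k))))) by (apply vec_eq; simpl; ring).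
      eapply Rle_trans; [apply norm1_add|].
      pose proof (Hc (S (n + k)) (dig (S (n + k)))). pose proof (HM (S (n + k))).
      assert (E : r ^ S (n + k) = r ^ S n * r ^ k) by (simpl; rewrite pow_add; ring).
      pose proof (pow_le r (S n) ltac:(lra)). pose proof (pow_le r k ltac:(lra)).
      assert (K * r ^ S (n + k) * norm1 (dig (S (n + k))) <= K * r ^ S (n + k) * Mb).
      { apply Rmult_le_compat_l; [|lra].
        rewrite E; apply Rmult_le_pos; [lra | apply Rmult_le_pos; assumption]. }
      assert (K * Mb * r ^ S n * (1 - r ^ S k) / (1 - r)
              = K * Mb * r ^ S n * (1 - r ^ k) / (1 - r) + K * r ^ S (n + k) * Mb)
        by (rewrite E; simpl; field; lra).
      lra. }
  intros k. eapply Rle_trans; [apply Geo|].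
  pose proof (pow_le r n ltac:(lra)). pose proof (pow_le r k ltac:(lra)).
  replace (K * Mb * r / (1 - r) * r ^ n) with (K * Mb * r ^ S n * 1 / (1 - r))
    by (simpl; field; lra).
  unfold Rdiv. apply Rmult_le_compat_r; [apply Rlt_le, Rinv_0_lt_compat; lra|].
  apply Rmult_le_compat_l; [|lra]. simpl. repeat apply Rmult_le_pos; lra.
Qed.

Lemma series_converges dig Mb :
  (forall i, norm1 (dig i) <= Mb) -> exists x, converges_to (series N dig) x.
Proof.
  intros HM. pose proof contr as [HK [Hr _]].
  set (C := K * Mb * r / (1 - r)).
  assert (HC : 0 <= C).
  { assert (0 <= Mb) by (pose proof (HM O); pose proof (norm1_ge0 (dig O)); lra).
    unfold C, Rdiv; repeat apply Rmult_le_pos; try lra. apply Rlt_le, Rinv_0_lt_compat; lra. }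
  assert (Cauchy : forall eps, 0 < eps -> exists J, forall n m, (J <= n)%nat -> (J <= m)%nat ->
            norm1 (vsub (series N dig m) (series N dig n)) < eps).
  { intros eps He. destruct (geometric_eventually_small r C eps Hr He) as [J HJ].
    exists J. intros n m Hn Hm. specialize (HJ J (le_n _)).
    assert (Far : forall a b, (J <= a <= b)%nat ->
                  norm1 (vsub (series N dig b) (series N dig a)) < eps).
    { intros a b Hab. replace b with (a + (b - a))%nat by lia.
      eapply Rle_lt_trans; [apply (series_tail dig Mb HM)|]. fold C.
      pose proof (pow_le_pow_of_le_1 r J a ltac:(lra) ltac:(lia)). nra. }
    destruct (Nat.le_ge_cases n m); [apply Far; lia|]. rewrite dist1_sym; apply Far; lia. }
  assert (C1 : Cauchy_crit (fun n => fst (series N dig n))).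
  { intros eps He; destruct (Cauchy eps He) as [J HJ]; exists J; intros n m Hn Hm.
    specialize (HJ m n Hm Hn). unfold R_dist, norm1, vsub in *; simpl in *.
    pose proof (Rabs_pos (snd (series N dig n) - snd (series N dig m))); lra. }
  assert (C2 : Cauchy_crit (fun n => snd (series N dig n))).
  { intros eps He; destruct (Cauchy eps He) as [J HJ]; exists J; intros n m Hn Hm.
    specialize (HJ m n Hm Hn). unfold R_dist, norm1, vsub in *; simpl in *.
    pose proof (Rabs_pos (fst (series N dig n) - fst (series N dig m))); lra. }
  destruct (R_complete _ C1) as [a Ha]. destruct (R_complete _ C2) as [b Hb].
  exists (a, b). apply converges_to_iff; auto.
Qed.

Lemma limit_tail dig Mb x : (forall i, norm1 (dig i) <= Mb) -> converges_to (series N dig) x ->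
  forall n, norm1 (vsub x (series N dig n)) <= K * Mb * r / (1 - r) * r ^ n.
Proof.
  intros HM Hx n. apply le_of_le_plus_eps; intros eps He.
  destruct (Hx eps He) as [J HJ]. specialize (HJ (n + J)%nat ltac:(lia)).
  pose proof (series_tail dig Mb HM n J).
  pose proof (dist1_triangle x (series N dig (n + J)) (series N dig n)).
  rewrite (dist1_sym (series N dig (n + J))) in HJ. lra.
Qed.

End ContractionSeries.

(** * Attractors of a contraction with finitely many digits *)

Definition digit_set (f : nat -> vec) (m : nat) (x : vec) : Prop :=
  exists k, (k < m)%nat /\ x = f k.

Definition attractor_gen (N : vec -> vec) (Dig : nat -> vec -> Prop) (x : vec) : Prop :=
  exists dig, (forall i, Dig i (dig i)) /\ converges_to (series N dig) x.

Definition attractor (N : vec -> vec) (f : nat -> vec) (m : nat) : vec -> Prop :=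
  attractor_gen N (fun _ => digit_set f m).

Lemma digit_set_bounded f m : exists Mb, forall x, digit_set f m x -> norm1 x <= Mb.
Proof.
  induction m as [|m [M HM]].
  - exists 0. intros x [k [Hk _]]; lia.
  - exists (Rmax M (norm1 (f m))). intros x [k [Hk ->]].
    destruct (Nat.eq_dec k m) as [->|]; [apply Rmax_r|].
    eapply Rle_trans; [apply HM; exists k; split; [lia|reflexivity] | apply Rmax_l].
Qed.

Lemma eventually_all_below (P : nat -> nat -> Prop) m :
  (forall k, (k < m)%nat -> exists n0, forall n, (n0 <= n)%nat -> P k n) ->
  exists n0, forall k, (k < m)%nat -> forall n, (n0 <= n)%nat -> P k n.
Proof.
  induction m; intros H.
  - exists O; intros; lia.
  - destruct IHm as [N1 H1]; [intros; apply H; lia|].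
    destruct (H m ltac:(lia)) as [N2 H2].
    exists (Nat.max N1 N2). intros k Hk n Hn.
    destruct (Nat.eq_dec k m) as [->|]; [apply H2 | apply H1]; lia.
Qed.

Section DigitSequences.

Variables (f : nat -> vec) (m : nat) (dg : nat -> nat -> vec).
Hypothesis dg_digits : forall n i, digit_set f m (dg n i).

Definition agree_upto (j : nat) (e : nat -> vec) (n : nat) : Prop :=
  forall i, (1 <= i <= j)%nat -> dg n i = e i.

Definition frequent (j : nat) (e : nat -> vec) : Prop :=
  forall n0, exists n, (n0 <= n)%nat /\ agree_upto j e n.

Definition set_at (e : nat -> vec) (p : nat) (x : vec) : nat -> vec :=
  fun i => if Nat.eqb i p then x else e i.

(** Pigeonhole: a frequent prefix extends to a frequent prefix one digit longer. *)
Lemma frequent_extend j e : frequent j e -> exists x, frequent (S j) (set_at e (S j) x).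
Proof.
  intros HI. apply NNPP; intro Hn.
  assert (H : forall k, (k < m)%nat -> exists n0, forall n, (n0 <= n)%nat ->
                ~ agree_upto (S j) (set_at e (S j) (f k)) n).
  { intros k Hk. apply NNPP; intro H1. apply Hn. exists (f k). intros n0. apply NNPP; intro H2.
    apply H1. exists n0. intros n Hn0 Ha. apply H2. exists n; auto. }
  destruct (eventually_all_below _ m H) as [N0 HN0]. destruct (HI N0) as [n [Hn0 Ha]].
  destruct (dg_digits n (S j)) as [k [Hk Hdk]]. apply (HN0 k Hk n Hn0).
  intros i Hi. unfold set_at. destruct (Nat.eq_dec i (S j)) as [->|Hne].
  - rewrite Nat.eqb_refl. auto.
  - rewrite (proj2 (Nat.eqb_neq i (S j)) Hne). apply Ha; lia.
Qed.

Fixpoint frequent_prefix (j : nat) : nat -> vec :=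
  match j with
  | O => dg O
  | S j' => set_at (frequent_prefix j') (S j')
              (epsilon (inhabits vzero)
                 (fun x => frequent (S j') (set_at (frequent_prefix j') (S j') x)))
  end.

Lemma frequent_prefix_stable j i : (i <= j)%nat -> frequent_prefix j i = frequent_prefix i i.
Proof.
  induction j; intros H.
  - replace i with O by lia; reflexivity.
  - destruct (Nat.eq_dec i (S j)) as [->|Hne]; [reflexivity|].
    simpl. unfold set_at. rewrite (proj2 (Nat.eqb_neq i (S j)) Hne). apply IHj; lia.
Qed.

Lemma frequent_prefix_frequent j : frequent j (frequent_prefix j).
Proof.
  induction j.
  - intros n0; exists n0; split; [lia|]. intros i Hi; lia.
  - apply (epsilon_spec (inhabits vzero)
             (fun x => frequent (S j) (set_at (frequent_prefix j) (S j) x))).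
    apply frequent_extend; auto.
Qed.

(** Koenig-type diagonal argument: some digit sequence [e] is approximated by infinitely
    many [dg n] on every initial segment. *)
Lemma diagonal_digits :
  exists e, (forall j, frequent j e) /\ (forall i, exists n, e i = dg n i).
Proof.
  exists (fun i => frequent_prefix i i). split.
  - intros j n0. destruct (frequent_prefix_frequent j n0) as [n [Hn Hag]].
    exists n; split; auto. intros i Hi. rewrite Hag by auto. apply frequent_prefix_stable; lia.
  - intros [|i]; [exists O; reflexivity|].
    destruct (frequent_prefix_frequent (S i) O) as [n [_ Hag]].
    exists n. rewrite (Hag (S i)) by lia. reflexivity.
Qed.

End DigitSequences.

Definition closed_set (S : vec -> Prop) : Prop :=
  forall x, (forall eps, 0 < eps -> exists y, S y /\ norm1 (vsub x y) < eps) -> S x.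

Section Attractor.

Variables (N : vec -> vec) (K r : R).
Hypothesis N_linear : linear N.
Hypothesis contr : contraction N K r.

Lemma attractor_bounded f m : exists B, forall y, attractor N f m y -> norm1 y <= B.
Proof.
  destruct (digit_set_bounded f m) as [Mb HMb].
  exists (K * Mb * r / (1 - r)). intros y [dig [Hd Hy]].
  pose proof (limit_tail N K r contr dig Mb y (fun i => HMb _ (Hd i)) Hy O) as H.
  simpl in H. replace (vsub y vzero) with y in H by (apply vec_eq; simpl; ring). lra.
Qed.

Lemma attractor_peel f m dig x :
  (forall i, digit_set f m (dig i)) -> converges_to (series N dig) x ->
  exists z, converges_to (series N (fun i => dig (S i))) z /\ x = N (vadd (dig 1%nat) z).
Proof.
  intros Hd Hx. destruct (digit_set_bounded f m) as [Mb HMb].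
  destruct (series_converges N K r contr (fun i => dig (S i)) Mb) as [z Hz];
    [intros; apply HMb, Hd|].
  exists z; split; auto.
  apply (converges_unique (fun n => series N dig (S n))); [exact (proj1 (converges_shift _ _) Hx)|].
  apply converges_ext with (fun n => N (vadd (dig 1%nat) (series N (fun i => dig (S i)) n))).
  - intros n. symmetry. apply series_peel; auto.
  - apply converges_linear; auto. apply converges_add_const; auto.
Qed.

Lemma attractor_prepend f m d y :
  attractor N f m y -> digit_set f m d -> attractor N f m (N (vadd d y)).
Proof.
  intros [dig [Hd Hy]] Hdd.
  exists (fun i => match i with O | S O => d | S j => dig j end). split.
  - intros [|[|i]]; auto.
  - apply (proj2 (converges_shift _ _)).
    apply converges_ext with (fun n => N (vadd d (series N dig n))).
    + intros n. rewrite series_peel; auto. do 2 f_equal. apply series_ext.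
      intros [|i] Hi; [lia | reflexivity].
    + apply converges_linear; auto. apply converges_add_const; auto.
Qed.

Lemma attractor_cluster f m (Dig : nat -> vec -> Prop) (a : nat -> vec) :
  (forall i x, Dig i x -> digit_set f m x) -> (forall n, attractor_gen N Dig (a n)) ->
  exists z, attractor_gen N Dig z /\
    forall eps, 0 < eps -> forall n0, exists n, (n0 <= n)%nat /\ norm1 (vsub (a n) z) < eps.
Proof.
  intros HD Ha.
  destruct (choice (fun n dig => (forall i, Dig i (dig i)) /\ converges_to (series N dig) (a n)) Ha)
    as [dg Hdg].
  assert (HdD : forall n i, digit_set f m (dg n i)) by (intros n i; apply (HD i), (proj1 (Hdg n))).
  destruct (diagonal_digits f m dg HdD) as [e [He Hev]].
  destruct (digit_set_bounded f m) as [Mb HMb].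
  assert (HeB : forall i, norm1 (e i) <= Mb).
  { intros i. destruct (Hev i) as [n ->]. apply HMb, HdD. }
  destruct (series_converges N K r contr e Mb HeB) as [z Hz].
  exists z; split.
  { exists e; split; auto. intros i. destruct (Hev i) as [n ->]. apply (proj1 (Hdg n)). }
  intros eps Heps n0. pose proof contr as [_ [Hr _]].
  destruct (geometric_eventually_small r (2 * (K * Mb * r / (1 - r))) eps Hr Heps) as [J HJ].
  specialize (HJ J (le_n _)).
  destruct (He J n0) as [n [Hn Hag]]. exists n; split; auto.
  assert (E : series N (dg n) J = series N e J) by (apply series_ext; intros; apply Hag; lia).
  pose proof (limit_tail N K r contr e Mb z HeB Hz J).
  pose proof (limit_tail N K r contr (dg n) Mb (a n) (fun i => HMb _ (HdD n i)) (proj2 (Hdg n)) J).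
  rewrite E in H0. pose proof (dist1_triangle (a n) (series N e J) z).
  rewrite (dist1_sym (series N e J) z) in H1. lra.
Qed.

Lemma attractor_closed f m Dig :
  (forall i x, Dig i x -> digit_set f m x) -> closed_set (attractor_gen N Dig).
Proof.
  intros HD x Hx.
  assert (Ha : forall n, exists y, attractor_gen N Dig y /\ norm1 (vsub x y) < / INR (S n)).
  { intros n; apply Hx. apply Rinv_0_lt_compat, lt_0_INR; lia. }
  destruct (choice _ Ha) as [a Ha2].
  destruct (attractor_cluster f m Dig a HD (fun n => proj1 (Ha2 n))) as [z [Hz Hcl]].
  replace x with z; auto. symmetry. apply dist1_zero, le_of_le_plus_eps; intros eps He.
  destruct (archimed_cor1 (eps / 2) ltac:(lra)) as [n0 [Hn0 Hn0p]].
  destruct (Hcl (eps / 2) ltac:(lra) n0) as [n [Hn Hn2]].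
  pose proof (proj2 (Ha2 n)).
  assert (/ INR (S n) <= / INR n0).
  { apply Rinv_le_contravar; [apply lt_0_INR; lia | apply le_INR; lia]. }
  pose proof (dist1_triangle x (a n) z). lra.
Qed.

End Attractor.

(** Points at positive distance from [S]; for closed [S] this is the complement of [S]. *)
Definition far_from (S : vec -> Prop) (x : vec) : Prop :=
  exists eps, 0 < eps /\ forall y, S y -> eps <= norm1 (vsub x y).

Lemma far_from_open S : open2 (far_from S).
Proof.
  intros x [eps [He H]]. exists (eps / 2); split; [lra|]. intros y' Hy'.
  exists (eps - 2 * vdist x y'). split; [lra|]. intros y Hy. specialize (H y Hy).
  pose proof (dist1_triangle x y' y). pose proof (dist1_le_vdist x y'). lra.
Qed.

Lemma far_from_not S x : far_from S x -> ~ S x.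
Proof. intros [eps [He H]] Hx. specialize (H x Hx). rewrite dist1_self in H. lra. Qed.

Lemma closed_far_from S x : closed_set S -> ~ S x -> far_from S x.
Proof.
  intros Hc Hn. apply NNPP; intro Ha. apply Hn, Hc. intros eps He. apply NNPP; intro H.
  apply Ha. exists eps; split; auto. intros y Hy.
  apply Rnot_lt_le. intro Hl. apply H. exists y; auto.
Qed.

Lemma not_connected_of_closed_split (S S1 S2 : vec -> Prop) :
  closed_set S1 -> closed_set S2 ->
  (forall x, S x -> S1 x \/ S2 x) -> (forall x, S1 x -> S x) -> (forall x, S2 x -> S x) ->
  (forall x, S1 x -> S2 x -> False) -> (exists x, S1 x) -> (exists x, S2 x) ->
  ~ connected2 S.
Proof.
  intros C1 C2 Cov In1 In2 Dis [p1 P1] [p2 P2] Hconn. apply Hconn.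
  assert (Far1 : forall x, S2 x -> far_from S1 x)
    by (intros x Hx; apply closed_far_from; auto; intro; apply (Dis x); auto).
  assert (Far2 : forall x, S1 x -> far_from S2 x)
    by (intros x Hx; apply closed_far_from; auto; intro; apply (Dis x); auto).
  exists (far_from S2), (far_from S1).
  split; [apply far_from_open|]. split; [apply far_from_open|].
  split; [intros x Hx; destruct (Cov x Hx); [left | right]; auto|].
  split; [exists p1; auto|]. split; [exists p2; auto|].
  intros x Hx H2 H1.
  destruct (Cov x Hx); [apply (far_from_not S1 x) | apply (far_from_not S2 x)]; auto.
Qed.

(** * Connectedness of attractors: the digit adjacency graph (Hata's criterion) *)

Definition digits_adjacent (N : vec -> vec) (f : nat -> vec) (m k j : nat) : Prop :=
  exists x y, attractor N f m x /\ attractor N f m y /\ vadd (f k) x = vadd (f j) y.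

(** A relation on [{0..m-1}] is connected: every class closed under it is everything. *)
Definition graph_connected (Rel : nat -> nat -> Prop) (m : nat) : Prop :=
  forall P : nat -> Prop,
    (forall k j, (k < m)%nat -> (j < m)%nat -> Rel k j -> (P k <-> P j)) ->
    forall k j, (k < m)%nat -> (j < m)%nat -> P k -> P j.

Section GraphOfConnected.

Variables (N : vec -> vec) (K r : R) (f : nat -> vec) (m : nat).
Hypothesis N_linear : linear N.
Hypothesis contr : contraction N K r.
Hypothesis N_injective : forall u w, N u = N w -> u = w.

Definition first_digit_in (P : nat -> Prop) : vec -> Prop :=
  attractor_gen N (fun i x => digit_set f m x /\
                     (i = 1%nat -> exists k, (k < m)%nat /\ P k /\ x = f k)).

Lemma first_digit_in_attractor P x : first_digit_in P x -> attractor N f m x.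
Proof. intros [dig [Hd Hx]]. exists dig; split; auto. intros i; apply Hd. Qed.

Lemma first_digit_in_closed P : closed_set (first_digit_in P).
Proof. apply (attractor_closed N K r contr f m). intros i x H; apply H. Qed.

Lemma first_digit_in_nonempty (P : nat -> Prop) k :
  (k < m)%nat -> P k -> exists x, first_digit_in P x.
Proof.
  intros Hk HP. destruct (digit_set_bounded f m) as [Mb HMb].
  destruct (series_converges N K r contr (fun _ => f k) Mb) as [x Hx];
    [intros; apply HMb; exists k; auto|].
  exists x, (fun _ => f k); split; auto. intros i; split; [exists k; auto | intros; exists k; auto].
Qed.

Lemma first_digit_overlap P x : first_digit_in P x -> first_digit_in (fun k => ~ P k) x ->
  exists k j, (k < m)%nat /\ (j < m)%nat /\ P k /\ ~ P j /\ digits_adjacent N f m k j.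
Proof.
  intros [d1 [Hd1 Hx1]] [d2 [Hd2 Hx2]].
  destruct (attractor_peel N K r N_linear contr f m d1 x (fun i => proj1 (Hd1 i)) Hx1)
    as [z1 [Hz1 E1]].
  destruct (attractor_peel N K r N_linear contr f m d2 x (fun i => proj1 (Hd2 i)) Hx2)
    as [z2 [Hz2 E2]].
  destruct (proj2 (Hd1 1%nat) eq_refl) as [k1 [Hk1 [P1 Q1]]].
  destruct (proj2 (Hd2 1%nat) eq_refl) as [k2 [Hk2 [P2 Q2]]].
  exists k1, k2. repeat split; auto. exists z1, z2.
  split; [exists (fun i => d1 (S i)); split; auto; intros i; apply Hd1|].
  split; [exists (fun i => d2 (S i)); split; auto; intros i; apply Hd2|].
  rewrite <- Q1, <- Q2. apply N_injective. congruence.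
Qed.

(** Connectedness of [T] forces connectedness of the adjacency graph: otherwise the
    first-digit classes of a nontrivial closed class split [T] into two closed pieces. *)
Lemma graph_connected_of_connected :
  connected2 (attractor N f m) -> graph_connected (digits_adjacent N f m) m.
Proof.
  intros Hconn P HP k0 j0 Hk0 Hj0 Hp. apply NNPP; intro Hnp.
  apply (not_connected_of_closed_split (attractor N f m) (first_digit_in P)
           (first_digit_in (fun k => ~ P k))); auto.
  - apply first_digit_in_closed.
  - apply first_digit_in_closed.
  - intros x [dig [Hd Hx]]. destruct (Hd 1%nat) as [k [Hk Ek]].
    destruct (classic (P k)); [left | right]; exists dig; split; auto;
      intros i; split; auto; intros ->; exists k; auto.
  - apply first_digit_in_attractor.
  - apply first_digit_in_attractor.
  - intros x H1 H2. destruct (first_digit_overlap P x H1 H2) as [k [j [Hk [Hj [Pk [Pj Adj]]]]]].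
    apply Pj. apply (HP k j); auto.
  - apply first_digit_in_nonempty with k0; auto.
  - apply first_digit_in_nonempty with j0; auto.
Qed.

End GraphOfConnected.

(** [prepend_word N e n y = N (e 1 + N (e 2 + ... N (e n + y)))]: the level-[n] piece of [T]
    with address [e 1 .. e n], evaluated at [y]. *)
Fixpoint prepend_word (N : vec -> vec) (e : nat -> vec) (n : nat) (y : vec) : vec :=
  match n with O => y | S k => prepend_word N e k (N (vadd (e (S k)) y)) end.

Lemma prepend_word_ext N e1 e2 n y :
  (forall i, (1 <= i <= n)%nat -> e1 i = e2 i) -> prepend_word N e1 n y = prepend_word N e2 n y.
Proof.
  revert y; induction n; intros y H; simpl; auto.
  rewrite H by lia. apply IHn; intros; apply H; lia.
Qed.

Lemma prepend_word_diff N e n y1 y2 : linear N ->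
  vsub (prepend_word N e n y1) (prepend_word N e n y2) = iterate N n (vsub y1 y2).
Proof.
  intros HN. revert y1 y2; induction n; intros; simpl; auto.
  rewrite IHn, <- iterate_comm, <- linear_sub by auto. do 2 f_equal. apply vec_eq; simpl; ring.
Qed.

Section ConnectedOfGraph.

Variables (N : vec -> vec) (K r : R) (f : nat -> vec) (m : nat) (U V : vec -> Prop).
Hypothesis N_linear : linear N.
Hypothesis contr : contraction N K r.
Hypothesis U_open : open2 U.
Hypothesis V_open : open2 V.
Hypothesis cover : forall x, attractor N f m x -> U x \/ V x.
Hypothesis disjoint : forall x, attractor N f m x -> U x -> V x -> False.

Lemma prepend_word_in e n y :
  (forall i, digit_set f m (e i)) -> attractor N f m y -> attractor N f m (prepend_word N e n y).
Proof.
  intros He. revert y; induction n; intros y Hy; simpl; auto.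
  apply IHn, (attractor_prepend N N_linear); auto.
Qed.

(** By compactness, the parts of [T] in [U] and in [V] are at positive distance. *)
Lemma separation_gap : exists delta, 0 < delta /\
  forall a b, attractor N f m a -> U a -> attractor N f m b -> V b -> delta <= norm1 (vsub a b).
Proof.
  apply NNPP; intro Hn.
  assert (Hab : forall n, exists ab : vec * vec,
             attractor N f m (fst ab) /\ U (fst ab) /\ attractor N f m (snd ab) /\ V (snd ab) /\
             norm1 (vsub (fst ab) (snd ab)) < / INR (S n)).
  { intros n. apply NNPP; intro H1. apply Hn. exists (/ INR (S n)); split.
    - apply Rinv_0_lt_compat, lt_0_INR; lia.
    - intros a b Ha HUa Hb HVb. apply Rnot_lt_le; intro Hl. apply H1. exists (a, b); simpl; auto. }
  destruct (choice _ Hab) as [ab Hab2].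
  destruct (attractor_cluster N K r contr f m (fun _ => digit_set f m) (fun n => fst (ab n))
              (fun _ x H => H) (fun n => proj1 (Hab2 n))) as [z [Hz Hcl]].
  destruct (cover z Hz) as [HUz | HVz].
  - destruct (U_open z HUz) as [eps [He Hb]].
    destruct (archimed_cor1 (eps / 2) ltac:(lra)) as [n0 [Hn0 Hn0p]].
    destruct (Hcl (eps / 2) ltac:(lra) n0) as [n [Hnn Hn2]].
    destruct (Hab2 n) as [F1 [U1 [F2 [V2 D12]]]].
    assert (/ INR (S n) <= / INR n0)
      by (apply Rinv_le_contravar; [apply lt_0_INR; lia | apply le_INR; lia]).
    apply (disjoint (snd (ab n)) F2); auto. apply Hb.
    eapply Rle_lt_trans; [apply vdist_le_dist1|].
    pose proof (dist1_triangle z (fst (ab n)) (snd (ab n))).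
    rewrite (dist1_sym z (fst (ab n))) in H0. lra.
  - destruct (V_open z HVz) as [eps [He Hb]].
    destruct (Hcl eps He O) as [n [_ Hn2]].
    destruct (Hab2 n) as [F1 [U1 [F2 [V2 D12]]]].
    apply (disjoint (fst (ab n)) F1); auto. apply Hb.
    eapply Rle_lt_trans; [apply vdist_le_dist1|]. rewrite dist1_sym; auto.
Qed.

Definition pieces_in_U (n : nat) : Prop :=
  forall e, (forall i, digit_set f m (e i)) -> forall y1 y2,
    attractor N f m y1 -> attractor N f m y2 ->
    U (prepend_word N e n y1) -> U (prepend_word N e n y2).

(** Pieces of a deep enough level are too small to meet both [U] and [V]. *)
Lemma pieces_in_U_eventually : exists n, pieces_in_U n.
Proof.
  destruct separation_gap as [delta [Hdel Hsep]].
  destruct (attractor_bounded N K r contr f m) as [B HB].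
  pose proof contr as [HK [Hr Hc]].
  destruct (geometric_eventually_small r (K * (2 * B)) delta Hr Hdel) as [n Hn].
  exists n. intros e He y1 y2 Hy1 Hy2 HU1.
  assert (S1 : attractor N f m (prepend_word N e n y1)) by (apply prepend_word_in; auto).
  assert (S2 : attractor N f m (prepend_word N e n y2)) by (apply prepend_word_in; auto).
  destruct (cover _ S2) as [|HV2]; auto. exfalso.
  pose proof (Hsep _ _ S1 HU1 S2 HV2) as Hgap. rewrite prepend_word_diff in Hgap by auto.
  pose proof (Hc n (vsub y1 y2)). pose proof (norm1_sub_le y1 y2).
  pose proof (HB y1 Hy1); pose proof (HB y2 Hy2). specialize (Hn n (le_n _)).
  pose proof (pow_le r n ltac:(lra)).
  assert (K * r ^ n * norm1 (vsub y1 y2) <= K * r ^ n * (2 * B))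
    by (apply Rmult_le_compat_l; [apply Rmult_le_pos|]; lra).
  lra.
Qed.

(** If the adjacency graph is connected, the property "lies in [U]" propagates from the
    level-[n+1] pieces to the level-[n] pieces: adjacent sub-pieces share a point. *)
Lemma pieces_in_U_coarsen n :
  graph_connected (digits_adjacent N f m) m -> pieces_in_U (S n) -> pieces_in_U n.
Proof.
  intros Hgraph HM e He y1 y2 Hy1 Hy2 HU1.
  set (e' := fun k => set_at e (S n) (f k)).
  assert (Ee' : forall k z, prepend_word N (e' k) (S n) z = prepend_word N e n (N (vadd (f k) z))).
  { intros k z. simpl. unfold e', set_at at 2. rewrite Nat.eqb_refl. apply prepend_word_ext.
    intros i Hi. unfold set_at. rewrite (proj2 (Nat.eqb_neq i (S n))) by lia. reflexivity. }
  assert (He' : forall k, (k < m)%nat -> forall i, digit_set f m (e' k i)).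
  { intros k Hk i. unfold e', set_at. destruct (Nat.eqb i (S n)); auto. exists k; auto. }
  set (P := fun k => exists z, attractor N f m z /\ U (prepend_word N e n (N (vadd (f k) z)))).
  assert (Prop_P : forall k j, (k < m)%nat -> digits_adjacent N f m k j -> P k -> P j).
  { intros k j Hk [x' [y' [Hx' [Hy' E]]]] [z [Hz HUz]]. exists y'; split; auto.
    rewrite <- E, <- Ee'. apply (HM _ (He' k Hk) z x'); auto. rewrite Ee'; auto. }
  destruct Hy1 as [d1 [Hd1 Hc1]]. destruct Hy2 as [d2 [Hd2 Hc2]].
  destruct (attractor_peel N K r N_linear contr f m d1 y1 Hd1 Hc1) as [z1 [Hz1 E1]].
  destruct (attractor_peel N K r N_linear contr f m d2 y2 Hd2 Hc2) as [z2 [Hz2 E2]].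
  destruct (Hd1 1%nat) as [k1 [Hk1 Ek1]]. destruct (Hd2 1%nat) as [k2 [Hk2 Ek2]].
  assert (Fz1 : attractor N f m z1) by (exists (fun i => d1 (S i)); auto).
  assert (Fz2 : attractor N f m z2) by (exists (fun i => d2 (S i)); auto).
  assert (P1 : P k1) by (exists z1; split; auto; rewrite <- Ek1, <- E1; auto).
  assert (P2 : P k2).
  { apply (Hgraph P) with k1; auto. intros k j Hk Hj Ha; split; apply Prop_P; auto.
    destruct Ha as [x' [y' [A1 [A2 A3]]]]. exists y', x'; auto. }
  destruct P2 as [z [Hz HUz]]. rewrite E2, Ek2, <- Ee'.
  apply (HM _ (He' k2 Hk2) z z2); auto. rewrite Ee'; auto.
Qed.

End ConnectedOfGraph.

Lemma connected_of_graph_connected N K r f m :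
  linear N -> contraction N K r ->
  graph_connected (digits_adjacent N f m) m -> connected2 (attractor N f m).
Proof.
  intros HN Hc Hgraph [U [V [HU [HV [Hcov [[p [Hp HUp]] [[q [Hq HVq]] Hdis]]]]]]].
  assert (Level0 : pieces_in_U N f m U 0).
  { destruct (pieces_in_U_eventually N K r f m U V HN Hc HU HV Hcov Hdis) as [n Hn].
    induction n; auto. apply IHn, (pieces_in_U_coarsen N K r f m U HN Hc); auto. }
  pose proof Hp as [e0 [He0 _]].
  apply (Hdis q Hq); auto. exact (Level0 e0 He0 p q Hp Hq HUp).
Qed.

(** * Transfer of adjacency along an anti-conjugacy [L N = - N' L] *)

Lemma pow_minus_one i : (-1) ^ i = if Nat.even i then 1 else -1.
Proof.
  induction i; [reflexivity|]. rewrite Nat.even_succ, <- Nat.negb_even. simpl pow. rewrite IHi.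
  destruct (Nat.even i); simpl; ring.
Qed.

Section AntiConjugacy.

Variables (N N' L : vec -> vec) (K' r' : R).
Hypothesis N_linear : linear N.
Hypothesis N'_linear : linear N'.
Hypothesis L_linear : linear L.
Hypothesis contr' : contraction N' K' r'.
Hypothesis anti_conj : forall u, L (N u) = vscale (-1) (N' (L u)).

Lemma iterate_anti_conj i u : L (iterate N i u) = vscale ((-1) ^ i) (iterate N' i (L u)).
Proof.
  induction i; simpl.
  - apply vec_eq; simpl; ring.
  - rewrite anti_conj, IHi, (proj2 N'_linear). apply vec_eq; simpl; ring.
Qed.

(** Exchanging the odd-indexed digits of two expansions absorbs the sign [(-1)^i]:
    the difference of the new [N']-expansions is [L] of the old difference. *)
Lemma series_diff_swap a b n :
  let a' := fun i => if Nat.even i then L (a i) else L (b i) in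
  let b' := fun i => if Nat.even i then L (b i) else L (a i) in
  vsub (series N' a' n) (series N' b' n) = L (vsub (series N a n) (series N b n)).
Proof.
  intros a' b'.
  assert (Term : forall i, vsub (iterate N' i (a' i)) (iterate N' i (b' i))
                           = L (vsub (iterate N i (a i)) (iterate N i (b i)))).
  { intros i. rewrite <- (linear_sub (iterate N i)), <- (linear_sub (iterate N' i))
      by (apply iterate_linear; auto).
    rewrite iterate_anti_conj, pow_minus_one. unfold a', b'. destruct (Nat.even i).
    - rewrite <- linear_sub by auto. apply vec_eq; simpl; ring.
    - replace (vsub (L (b i)) (L (a i))) with (vscale (-1) (L (vsub (a i) (b i))))
        by (rewrite linear_sub by auto; apply vec_eq; simpl; ring).
      rewrite (proj2 (iterate_linear N' N'_linear i)). reflexivity. }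
  induction n; simpl.
  - replace (vsub vzero vzero) with vzero by (apply vec_eq; simpl; ring).
    symmetry; apply linear_zero; auto.
  - replace (vsub (vadd (series N a n) (N (iterate N n (a (S n)))))
                  (vadd (series N b n) (N (iterate N n (b (S n))))))
      with (vadd (vsub (series N a n) (series N b n))
                 (vsub (iterate N (S n) (a (S n))) (iterate N (S n) (b (S n)))))
      by (apply vec_eq; simpl; ring).
    rewrite (proj1 L_linear), <- IHn, <- Term. apply vec_eq; simpl; ring.
Qed.

Lemma adjacent_transfer f m k j :
  digits_adjacent N f m k j -> digits_adjacent N' (fun i => L (f i)) m k j.
Proof.
  intros [x [y [[a [Ha Hx]] [[b [Hb Hy]] E]]]].
  set (a' := fun i => if Nat.even i then L (a i) else L (b i)).
  set (b' := fun i => if Nat.even i then L (b i) else L (a i)).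
  assert (Digits : forall d1 d2 : nat -> vec, (forall i, digit_set f m (d1 i)) ->
            (forall i, digit_set f m (d2 i)) ->
            forall i, digit_set (fun i => L (f i)) m (if Nat.even i then L (d1 i) else L (d2 i))).
  { intros d1 d2 H1 H2 i. destruct (Nat.even i);
      [destruct (H1 i) as [kk [Hk ->]] | destruct (H2 i) as [kk [Hk ->]]]; exists kk; auto. }
  destruct (digit_set_bounded (fun i => L (f i)) m) as [Mb HMb].
  destruct (series_converges N' K' r' contr' a' Mb (fun i => HMb _ (Digits a b Ha Hb i)))
    as [x' Hx'].
  destruct (series_converges N' K' r' contr' b' Mb (fun i => HMb _ (Digits b a Hb Ha i)))
    as [y' Hy'].
  exists x', y'. split; [exists a'; split; [apply Digits|]; auto|].
  split; [exists b'; split; [apply Digits|]; auto|].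
  assert (Ediff : vsub x y = vsub (f j) (f k)).
  { pose proof (f_equal fst E); pose proof (f_equal snd E); simpl in *.
    apply vec_eq; simpl; lra. }
  assert (Ediff' : vsub x' y' = L (vsub x y)).
  { apply (converges_unique (fun n => vsub (series N' a' n) (series N' b' n)));
      [apply converges_sub; auto|].
    apply converges_ext with (fun n => L (vsub (series N a n) (series N b n))).
    - intros n; symmetry; apply series_diff_swap.
    - apply converges_linear; auto. apply converges_sub; auto. }
  rewrite Ediff, linear_sub in Ediff' by auto.
  pose proof (f_equal fst Ediff'); pose proof (f_equal snd Ediff'); simpl in *.
  apply vec_eq; simpl; lra.
Qed.

End AntiConjugacy.

Lemma graph_connected_mono (Rel Rel' : nat -> nat -> Prop) m :
  (forall k j, Rel k j -> Rel' k j) -> graph_connected Rel m -> graph_connected Rel' m.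
Proof. intros Hsub Hg P HP. apply Hg. intros k j Hk Hj HR. apply HP; auto. Qed.

Lemma connected_transfer N N' L K r K' r' f m :
  linear N -> linear N' -> linear L -> contraction N K r -> contraction N' K' r' ->
  (forall u w, N u = N w -> u = w) -> (forall u, L (N u) = vscale (-1) (N' (L u))) ->
  connected2 (attractor N f m) -> connected2 (attractor N' (fun i => L (f i)) m).
Proof.
  intros HN HN' HL Hc Hc' Hinj HLN Hconn.
  apply (connected_of_graph_connected N' K' r'); auto.
  apply (graph_connected_mono (digits_adjacent N f m)).
  - intros k j. apply (adjacent_transfer N N' L K' r'); auto.
  - apply (graph_connected_of_connected N K r); auto.
Qed.

(** * Contraction from a quadratic form expanded by the inverse map *)

Definition sqnorm (u : vec) : R := fst u * fst u + snd u * snd u.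

Definition lin_det (T : vec -> vec) : R :=
  fst (T (1, 0)) * snd (T (0, 1)) - snd (T (1, 0)) * fst (T (0, 1)).

Lemma linear_expand T u : linear T ->
  T u = vadd (vscale (fst u) (T (1, 0))) (vscale (snd u) (T (0, 1))).
Proof.
  intros [Ha Hs]. rewrite <- !Hs, <- Ha. f_equal. apply vec_eq; simpl; ring.
Qed.

Lemma lin_det_comp F G : linear F -> linear G -> lin_det (fun u => F (G u)) = lin_det F * lin_det G.
Proof.
  intros HF HG. unfold lin_det.
  rewrite (linear_expand F (G (1, 0))), (linear_expand F (G (0, 1))) by auto. simpl. ring.
Qed.

Lemma linear_bounded_below T : linear T -> lin_det T <> 0 ->
  exists c, 0 <= c /\ forall u, norm1 u <= c * norm1 (T u).
Proof.
  intros HT Hdet.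
  set (a := T (1, 0)); set (b := T (0, 1)).
  set (Tinv := fun y : vec => ((snd b * fst y - fst b * snd y) / lin_det T,
                               (fst a * snd y - snd a * fst y) / lin_det T)).
  assert (Tinv_linear : linear Tinv)
    by (split; intros; apply vec_eq; unfold Tinv; simpl; field; auto).
  destruct (linear_bounded Tinv Tinv_linear) as [c [Hc Hcb]].
  exists c; split; auto. intros u. replace u with (Tinv (T u)) at 1; auto.
  rewrite (linear_expand T u HT). fold a b. unfold Tinv, lin_det in *. fold a b in Hdet |- *.
  apply vec_eq; simpl; field; auto.
Qed.

Lemma abs_mul_self a : Rabs a * Rabs a = a * a.
Proof. rewrite <- Rabs_mult. apply Rabs_right, Rle_ge, Rle_0_sqr. Qed.

Lemma norm1_sq_le_sqnorm u : norm1 u * norm1 u <= 2 * sqnorm u.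
Proof.
  unfold norm1, sqnorm. rewrite <- (abs_mul_self (fst u)), <- (abs_mul_self (snd u)).
  pose proof (Rle_0_sqr (Rabs (fst u) - Rabs (snd u))). unfold Rsqr in *. nra.
Qed.

Lemma sqnorm_le_norm1_sq u : sqnorm u <= norm1 u * norm1 u.
Proof.
  unfold norm1, sqnorm. rewrite <- (abs_mul_self (fst u)), <- (abs_mul_self (snd u)).
  pose proof (Rabs_pos (fst u)); pose proof (Rabs_pos (snd u)). nra.
Qed.

Section FormContraction.

Variables (N T : vec -> vec) (rho : R).
Hypothesis T_linear : linear T.
Hypothesis T_invertible : lin_det T <> 0.
Hypothesis rho_gt1 : 1 < rho.
Hypothesis shrink : forall u, rho * sqnorm (T (N u)) <= sqnorm (T u).

Lemma form_iterate n u : sqnorm (T (iterate N n u)) <= (/ rho) ^ n * sqnorm (T u).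
Proof.
  induction n; simpl; [lra|].
  pose proof (shrink (iterate N n u)) as H.
  apply Rmult_le_compat_l with (r := / rho) in H; [|apply Rlt_le, Rinv_0_lt_compat; lra].
  rewrite <- Rmult_assoc, Rinv_l, Rmult_1_l in H by lra.
  pose proof (Rinv_0_lt_compat rho ltac:(lra)). nra.
Qed.

Lemma iterate_sq_bound : exists C0, 0 <= C0 /\ forall n u,
  norm1 (iterate N n u) * norm1 (iterate N n u) <= C0 * (/ rho) ^ n * (norm1 u * norm1 u).
Proof.
  destruct (linear_bounded_below T T_linear T_invertible) as [c [Hc Hcb]].
  destruct (linear_bounded T T_linear) as [C [HC HCb]].
  exists (2 * (c * c) * (C * C)). split; [nra|]. intros n u. set (x := iterate N n u).
  pose proof (pow_le (/ rho) n (Rlt_le _ _ (Rinv_0_lt_compat rho ltac:(lra)))).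
  assert (Lx : norm1 x * norm1 x <= c * c * (2 * sqnorm (T x))).
  { apply Rle_trans with ((c * norm1 (T x)) * (c * norm1 (T x))).
    - apply Rmult_le_compat; auto; apply norm1_ge0.
    - replace ((c * norm1 (T x)) * (c * norm1 (T x)))
        with (c * c * (norm1 (T x) * norm1 (T x))) by ring.
      apply Rmult_le_compat_l; [nra | apply norm1_sq_le_sqnorm]. }
  assert (Lu : sqnorm (T u) <= C * C * (norm1 u * norm1 u)).
  { eapply Rle_trans; [apply sqnorm_le_norm1_sq|].
    replace (C * C * (norm1 u * norm1 u)) with ((C * norm1 u) * (C * norm1 u)) by ring.
    apply Rmult_le_compat; auto; apply norm1_ge0. }
  pose proof (form_iterate n u) as It. fold x in It.
  apply Rle_trans with (c * c * (2 * ((/ rho) ^ n * (C * C * (norm1 u * norm1 u)))));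
    [|right; ring].
  eapply Rle_trans; [exact Lx|]. apply Rmult_le_compat_l; [nra|].
  apply Rmult_le_compat_l; [lra|]. eapply Rle_trans; [exact It|].
  apply Rmult_le_compat_l; auto.
Qed.

Lemma contraction_of_form : exists K r, contraction N K r.
Proof.
  destruct iterate_sq_bound as [C0 [HC0 Hbound]].
  assert (Hinv : 0 < / rho) by (apply Rinv_0_lt_compat; lra).
  set (r := sqrt (/ rho)). set (K := sqrt C0 + 1).
  assert (Hr0 : 0 < r) by (apply sqrt_lt_R0; auto).
  assert (Hr1 : r < 1).
  { unfold r. rewrite <- sqrt_1. apply sqrt_lt_1_alt. split; [lra|].
    rewrite <- Rinv_1. apply Rinv_lt_contravar; lra. }
  assert (Hrr : r * r = / rho) by (apply sqrt_sqrt; lra).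
  pose proof (sqrt_sqrt C0 HC0); pose proof (sqrt_pos C0).
  assert (HK : C0 <= K * K) by (unfold K; nra).
  exists K, r. split; [unfold K; lra|]. split; [lra|]. intros n u.
  set (t := r ^ n * norm1 u).
  pose proof (pow_le r n ltac:(lra)); pose proof (norm1_ge0 u).
  assert (Ht : 0 <= t) by (unfold t; nra).
  apply Rsqr_incr_0_var; unfold Rsqr;
    [|replace (K * r ^ n * norm1 u) with (K * t) by (unfold t; ring); unfold K; nra].
  eapply Rle_trans; [apply Hbound|].
  replace (C0 * (/ rho) ^ n * (norm1 u * norm1 u)) with (C0 * (t * t))
    by (unfold t; rewrite <- Hrr, Rpow_mult_distr; ring).
  replace (K * r ^ n * norm1 u * (K * r ^ n * norm1 u)) with (K * K * (t * t)) by (unfold t; ring).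
  apply Rmult_le_compat_r; nra.
Qed.

End FormContraction.

(** * The companion map of [z^2 + P z + Q] expands a suitable Euclidean norm *)

(** Multiplication by [z] on [R[z]/(z^2 + P z + Q)] in the basis [(1, z)]. *)
Definition companion (P Q : R) (y : vec) : vec := (- Q * snd y, fst y - P * snd y).

(** All complex roots [x + i y] of [z^2 + P z + Q] have modulus [> 1]. *)
Definition roots_outside_unit_circle (P Q : R) : Prop :=
  forall x y, x * x - y * y + P * x + Q = 0 -> 2 * x * y + P * y = 0 -> x * x + y * y > 1.

Definition expands_some_norm (M : vec -> vec) : Prop :=
  exists G rho, linear G /\ lin_det G <> 0 /\ 1 < rho /\
    forall y, rho * sqnorm (G y) <= sqnorm (G (M y)).

Definition form_map (c1 e1 c2 e2 : R) (y : vec) : vec :=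
  (c1 * fst y + e1 * snd y, c2 * fst y + e2 * snd y).

Lemma form_map_linear c1 e1 c2 e2 : linear (form_map c1 e1 c2 e2).
Proof. split; intros; apply vec_eq; unfold form_map; simpl; ring. Qed.

Lemma lin_det_form_map c1 e1 c2 e2 : lin_det (form_map c1 e1 c2 e2) = c1 * e2 - c2 * e1.
Proof. unfold lin_det, form_map; simpl; ring. Qed.

Lemma expands_by_form c1 e1 c2 e2 rho M : c1 * e2 - c2 * e1 <> 0 -> 1 < rho ->
  (forall y, rho * sqnorm (form_map c1 e1 c2 e2 y) <= sqnorm (form_map c1 e1 c2 e2 (M y))) ->
  expands_some_norm M.
Proof.
  intros Hdet Hrho H. exists (form_map c1 e1 c2 e2), rho.
  rewrite lin_det_form_map. repeat split; auto; apply form_map_linear.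
Qed.

(** Non-real roots [-P/2 +- i s]: in suitable coordinates [M] is a similarity of ratio [sqrt Q]. *)
Lemma companion_complex_roots P Q :
  roots_outside_unit_circle P Q -> P * P < 4 * Q -> expands_some_norm (companion P Q).
Proof.
  intros Hroots Hdisc. set (s := sqrt (Q - P * P / 4)).
  assert (Hs : s * s = Q - P * P / 4) by (apply sqrt_sqrt; lra).
  assert (Hs0 : 0 < s) by (apply sqrt_lt_R0; lra).
  assert (HQ : Q > 1).
  { specialize (Hroots (- P / 2) s).
    replace (- P / 2 * (- P / 2) + s * s) with Q in Hroots by (rewrite Hs; field).
    apply Hroots; [rewrite Hs; field | field]. }
  apply (expands_by_form 1 (- P / 2) 0 s Q); [lra | lra |].
  intros y. unfold sqnorm, form_map, companion; simpl. right.
  set (a := fst y); set (b := snd y).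
  replace ((0 * (- Q * b) + s * (a - P * b)) * (0 * (- Q * b) + s * (a - P * b)))
    with (s * s * ((a - P * b) * (a - P * b))) by ring.
  replace ((0 * a + s * b) * (0 * a + s * b)) with (s * s * (b * b)) by ring.
  rewrite Hs. field.
Qed.

(** Double root [l]: [M] is a Jordan block [l I + E]; shrinking the off-diagonal entry to
    [s = (l^2 - 1) / (2 l)] gives expansion by [(l^2 + 1) / 2]. *)
Lemma companion_double_root P Q :
  roots_outside_unit_circle P Q -> P * P = 4 * Q -> expands_some_norm (companion P Q).
Proof.
  intros Hroots Hdisc. set (l := - P / 2).
  assert (HQl : Q = l * l) by (unfold l; nra).
  assert (Hl : l * l > 1).
  { pose proof (Hroots l 0) as H.
    assert (E1 : l * l - 0 * 0 + P * l + Q = 0) by (rewrite HQl; unfold l; field).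
    assert (E2 : 2 * l * 0 + P * 0 = 0) by ring.
    specialize (H E1 E2). lra. }
  assert (Hl0 : l <> 0) by (intro H0; rewrite H0 in Hl; lra).
  set (s := (l * l - 1) / (2 * l)).
  assert (Hsl : s * l = (l * l - 1) / 2) by (unfold s; field; auto).
  assert (Hs0 : s <> 0) by (intro H; rewrite H in Hsl; lra).
  apply (expands_by_form 1 l 0 s ((l * l + 1) / 2)); [intro; apply Hs0; lra | lra |].
  intros y. unfold sqnorm, form_map, companion; simpl.
  set (h1 := 1 * fst y + l * snd y). set (h2 := 0 * fst y + s * snd y).
  replace (1 * (- Q * snd y) + l * (fst y - P * snd y)) with (l * h1)
    by (unfold h1; rewrite HQl; unfold l; field).
  replace (0 * (- Q * snd y) + s * (fst y - P * snd y)) with (s * h1 + l * h2)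
    by (unfold h1, h2, l; field).
  clearbody h1 h2.
  pose proof (Rle_0_sqr (h1 + h2)); pose proof (Rle_0_sqr (s * h1)). unfold Rsqr in *.
  assert (0 <= (l * l - 1) / 2 * ((h1 + h2) * (h1 + h2))) by (apply Rmult_le_pos; lra).
  nra.
Qed.

(** Distinct real roots [l], [u]: [M] is diagonal in the eigenbasis, expansion [min(l^2, u^2)]. *)
Lemma companion_real_roots P Q :
  roots_outside_unit_circle P Q -> 4 * Q < P * P -> expands_some_norm (companion P Q).
Proof.
  intros Hroots Hdisc. set (s := sqrt (P * P - 4 * Q)).
  assert (Hs : s * s = P * P - 4 * Q) by (apply sqrt_sqrt; lra).
  assert (Hs0 : 0 < s) by (apply sqrt_lt_R0; lra).
  set (l := (- P + s) / 2). set (u := (- P - s) / 2).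
  assert (Rl : l * l + P * l + Q = 0) by (unfold l; nra).
  assert (Ru : u * u + P * u + Q = 0) by (unfold u; nra).
  assert (Hl : l * l > 1) by (pose proof (Hroots l 0); nra).
  assert (Hu : u * u > 1) by (pose proof (Hroots u 0); nra).
  apply (expands_by_form 1 l 1 u (Rmin (l * l) (u * u)));
    [unfold l, u; lra | apply Rmin_glb_lt; lra |].
  intros y. unfold sqnorm, form_map, companion; simpl.
  replace (1 * (- Q * snd y) + l * (fst y - P * snd y)) with (l * (1 * fst y + l * snd y)) by nra.
  replace (1 * (- Q * snd y) + u * (fst y - P * snd y)) with (u * (1 * fst y + u * snd y)) by nra.
  set (g1 := 1 * fst y + l * snd y). set (g2 := 1 * fst y + u * snd y). clearbody g1 g2.
  pose proof (Rmin_l (l * l) (u * u)). pose proof (Rmin_r (l * l) (u * u)).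
  pose proof (Rle_0_sqr g1). pose proof (Rle_0_sqr g2). unfold Rsqr in *.
  assert (Rmin (l * l) (u * u) * (g1 * g1) <= l * l * (g1 * g1)) by (apply Rmult_le_compat_r; auto).
  assert (Rmin (l * l) (u * u) * (g2 * g2) <= u * u * (g2 * g2)) by (apply Rmult_le_compat_r; auto).
  nra.
Qed.

Lemma companion_expands P Q :
  roots_outside_unit_circle P Q -> expands_some_norm (companion P Q).
Proof.
  intros Hroots. destruct (Rtotal_order (P * P) (4 * Q)) as [H | [H | H]].
  - apply companion_complex_roots; auto.
  - apply companion_double_root; auto.
  - apply companion_real_roots; auto.
Qed.

Lemma charpoly_real A p q : charpoly_is A p q ->
  IZR (m11 A) + IZR (m22 A) = - IZR p /\
  IZR (m11 A) * IZR (m22 A) - IZR (m12 A) * IZR (m21 A) = IZR q.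
Proof.
  intros [H1 H2]. unfold mtrace, mdet in *. split.
  - rewrite <- H1, opp_IZR, plus_IZR; ring.
  - rewrite <- H2, minus_IZR, !mult_IZR; ring.
Qed.

Lemma mapply_linear A : linear (mapply A).
Proof. unfold mapply; split; intros; apply vec_eq; simpl; ring. Qed.

Lemma minv_apply_linear A : linear (minv_apply A).
Proof. unfold minv_apply; split; intros; apply vec_eq; simpl; unfold Rdiv; ring. Qed.

Lemma mapply_minv_apply A u : IZR (mdet A) <> 0 -> mapply A (minv_apply A u) = u.
Proof.
  unfold mapply, minv_apply, mdet. rewrite minus_IZR, !mult_IZR. intros H.
  apply vec_eq; simpl; field; auto.
Qed.

Lemma minv_apply_mapply A u : IZR (mdet A) <> 0 -> minv_apply A (mapply A u) = u.
Proof.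
  unfold mapply, minv_apply, mdet. rewrite minus_IZR, !mult_IZR. intros H.
  apply vec_eq; simpl; field; auto.
Qed.

Lemma cayley_hamilton A p q u : charpoly_is A p q ->
  mapply A (mapply A u) = vadd (vscale (- IZR p) (mapply A u)) (vscale (- IZR q) u).
Proof.
  intros Hc. destruct (charpoly_real A p q Hc) as [HP HQ]. rewrite <- HQ, <- HP.
  unfold mapply; apply vec_eq; simpl; ring.
Qed.

Definition vdet (v a : vec) : R := fst v * snd a - snd v * fst a.

Lemma lin_indep_vdet v a : lin_indep2 v a -> vdet v a <> 0.
Proof.
  unfold vdet. intros Hi Hd.
  destruct (Hi (snd a) (- snd v)) as [Ha2 Hv2]; [apply vec_eq; simpl; nra|].
  destruct (Hi (fst a) (- fst v)) as [Ha1 Hv1]; [apply vec_eq; simpl; nra|].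
  destruct (Hi 1 0) as [H10 _]; [apply vec_eq; simpl; nra|]. lra.
Qed.

Definition coords (v a u : vec) : vec :=
  ((snd a * fst u - fst a * snd u) / vdet v a, (fst v * snd u - snd v * fst u) / vdet v a).

Lemma coords_linear v a : linear (coords v a).
Proof. unfold coords; split; intros; apply vec_eq; simpl; unfold Rdiv; ring. Qed.

Lemma lin_det_coords v a : vdet v a <> 0 -> lin_det (coords v a) <> 0.
Proof.
  intros Hd. unfold lin_det, coords; simpl.
  replace (_ - _) with (/ vdet v a) by (unfold vdet in *; field; auto).
  apply Rinv_neq_0_compat; auto.
Qed.

Lemma coords_mapply A p q v u : charpoly_is A p q -> vdet v (mapply A v) <> 0 ->
  coords v (mapply A v) (mapply A u) = companion (IZR p) (IZR q) (coords v (mapply A v) u).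
Proof.
  intros Hc Hd. destruct (charpoly_real A p q Hc) as [HP HQ].
  unfold coords, companion, vdet in *. destruct v as [v1 v2]. unfold mapply in *; simpl in *.
  rewrite <- HQ. replace (IZR p) with (- (IZR (m11 A) + IZR (m22 A))) by lra.
  apply vec_eq; simpl; field; auto.
Qed.

(** If [A] is expanding, every root of [x^2 + p x + q] is an eigenvalue, so has modulus [> 1]:
    for a root [lambda] with conjugate partner [mu = - p - lambda], the vector [(A - mu) v]
    is an eigenvector, nonzero because [v] and [A v] are independent. *)
Lemma expanding_roots A p q v : expanding A -> charpoly_is A p q -> lin_indep2 v (mapply A v) ->
  roots_outside_unit_circle (IZR p) (IZR q).
Proof.
  intros He Hc Hi lr li R1 R2. destruct (charpoly_real A p q Hc) as [HP HQ].
  enough (Hev : is_eigenvalue A (lr, li))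
    by (apply He in Hev; unfold cnorm2 in Hev; simpl in Hev; lra).
  unfold is_eigenvalue. destruct v as [v1 v2]. unfold mapply in *; simpl in *.
  set (a11 := IZR (m11 A)) in *. set (a12 := IZR (m12 A)) in *.
  set (a21 := IZR (m21 A)) in *. set (a22 := IZR (m22 A)) in *.
  set (P := IZR p) in *. set (Q := IZR q) in *. clearbody a11 a12 a21 a22 P Q.
  set (a1 := a11 * v1 + a12 * v2) in *. set (a2 := a21 * v1 + a22 * v2) in *.
  set (mr := - P - lr).
  assert (CH1 : a11 * a1 + a12 * a2 = - P * a1 - Q * v1) by (rewrite <- HQ; unfold a1, a2; nra).
  assert (CH2 : a21 * a1 + a22 * a2 = - P * a2 - Q * v2) by (rewrite <- HQ; unfold a1, a2; nra).
  assert (Hq : Q = - (lr * lr - li * li + P * lr)) by lra.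
  exists (a1 - mr * v1, li * v1), (a2 - mr * v2, li * v2). split; [|split].
  - apply NNPP; intro Hn. apply not_or_and in Hn. destruct Hn as [Hn1 Hn2].
    apply NNPP in Hn1. apply NNPP in Hn2. injection Hn1 as Hn1 _. injection Hn2 as Hn2 _.
    destruct (Hi mr (-1)) as [_ E]; [apply vec_eq; simpl; lra | lra].
  - unfold cmul; apply vec_eq; simpl.
    + transitivity ((a11 * a1 + a12 * a2) - mr * a1); [unfold mr, a1, a2; ring|].
      rewrite CH1, Hq. unfold mr; ring.
    + transitivity (li * a1 + v1 * (2 * lr * li + P * li));
        [rewrite R2; unfold a1; ring | unfold mr; ring].
  - unfold cmul; apply vec_eq; simpl.
    + transitivity ((a21 * a1 + a22 * a2) - mr * a2); [unfold mr, a1, a2; ring|].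
      rewrite CH2, Hq. unfold mr; ring.
    + transitivity (li * a2 + v2 * (2 * lr * li + P * li));
        [rewrite R2; unfold a2; ring | unfold mr; ring].
Qed.

(** For expanding [A], [A^{-1}] (i.e. [minv_apply A]) is well defined and a contraction:
    in the coordinates of the basis [(v, A v)], [A] is the companion map, which expands
    some Euclidean norm. *)
Lemma inverse_contraction A p q v : expanding A -> charpoly_is A p q -> lin_indep2 v (mapply A v) ->
  IZR (mdet A) <> 0 /\ exists K r, contraction (minv_apply A) K r.
Proof.
  intros He Hc Hi. pose proof (expanding_roots A p q v He Hc Hi) as Hroots.
  assert (Hdet : IZR (mdet A) <> 0).
  { destruct Hc as [_ ->]. intro H0. specialize (Hroots 0 0). rewrite H0 in Hroots. lra. }
  split; auto.
  destruct (companion_expands _ _ Hroots) as [G [rho [HG [HGdet [Hrho Hexp]]]]].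
  pose proof (lin_indep_vdet _ _ Hi) as Hd.
  set (C := coords v (mapply A v)).
  apply (contraction_of_form (minv_apply A) (fun u => G (C u)) rho).
  - apply linear_comp; auto. apply coords_linear.
  - rewrite lin_det_comp by (auto; apply coords_linear).
    apply Rmult_integral_contrapositive; split; auto. apply lin_det_coords; auto.
  - auto.
  - intros u. rewrite <- (mapply_minv_apply A u Hdet) at 2. unfold C.
    rewrite coords_mapply with (p := p) (q := q) by auto. apply Hexp.
Qed.

(** * The anti-conjugacy between [A] and [B] *)

Definition basis_change (v a w z u : vec) : vec :=
  vadd (vscale (fst (coords v a u)) w) (vscale (snd (coords v a u)) z).

Lemma basis_change_linear v a w z : linear (basis_change v a w z).
Proof. unfold basis_change, coords; split; intros; apply vec_eq; simpl; unfold Rdiv; ring. Qed.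

Lemma basis_change_combination v a w z al be : vdet v a <> 0 ->
  basis_change v a w z (vadd (vscale al a) (vscale be v)) = vadd (vscale al z) (vscale be w).
Proof. intros Hd. unfold basis_change, coords, vdet in *. apply vec_eq; simpl; field; auto. Qed.

(** Sending [(v, A v)] to [(w, - B w)] conjugates [A] to [- B]: both act as the companion
    map of [x^2 + p x + q] in these bases (as [B] has characteristic polynomial [x^2 - p x + q]). *)
Lemma basis_change_anti_conj A B p q v w x :
  charpoly_is A p q -> charpoly_is B (- p)%Z q -> vdet v (mapply A v) <> 0 ->
  let L := basis_change v (mapply A v) w (vscale (-1) (mapply B w)) in
  L (mapply A x) = vscale (-1) (mapply B (L x)).
Proof.
  intros HA HB Hd L. unfold L, basis_change.
  rewrite coords_mapply with (p := p) (q := q) by auto.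
  destruct (coords v (mapply A v) x) as [c1 c2]. unfold companion; simpl.
  rewrite (proj1 (mapply_linear B)), !(proj2 (mapply_linear B)), (cayley_hamilton B (- p) q w HB).
  rewrite opp_IZR. apply vec_eq; simpl; ring.
Qed.

Lemma partial_sum_series A dig n : partial_sum A dig n = series (minv_apply A) dig n.
Proof.
  assert (Pow : forall i u, minv_pow A i u = iterate (minv_apply A) i u)
    by (induction i; simpl; congruence).
  induction n; simpl; auto. rewrite IHn, Pow. reflexivity.
Qed.

Lemma self_affine_attractor A f m x :
  self_affine A (digit_set f m) x <-> attractor (minv_apply A) f m x.
Proof.
  unfold self_affine, attractor, attractor_gen.
  split; intros [dig [HD Hc]]; exists dig; split; auto.
  - apply converges_to_iff. destruct Hc as [H1 H2].
    split; eapply Un_cv_ext; [| exact H1 | | exact H2];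
      intros; simpl; rewrite partial_sum_series; auto.
  - apply converges_to_iff in Hc. destruct Hc as [H1 H2].
    split; eapply Un_cv_ext; [| exact H1 | | exact H2];
      intros; simpl; rewrite partial_sum_series; auto.
Qed.

Lemma attractor_digits_ext N f g m x :
  (forall i, f i = g i) -> attractor N f m x <-> attractor N g m x.
Proof.
  intros E. unfold attractor, attractor_gen, digit_set.
  split; intros [dig [Hd Hc]]; exists dig; split; auto; intros i;
    destruct (Hd i) as [k [Hk Ek]]; exists k; rewrite Ek, ?E; auto.
Qed.

Lemma connected2_ext S S' : (forall x, S x <-> S' x) -> connected2 S -> connected2 S'.
Proof.
  intros E Hc [U [V [HU [HV [Hcov [[p [Hp HUp]] [[q [Hq HVq]] Hd]]]]]]]. apply Hc.
  exists U, V. repeat split; auto.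
  - intros x Hx; apply Hcov, E; auto.
  - exists p; split; auto; apply E; auto.
  - exists q; split; auto; apply E; auto.
  - intros x Hx; apply Hd, E; auto.
Qed.

Lemma connected_one_direction A B p q v w (cA cB dd : nat -> R) m :
  expanding A -> expanding B -> charpoly_is A p q -> charpoly_is B (- p)%Z q ->
  lin_indep2 v (mapply A v) -> lin_indep2 w (mapply B w) -> (forall i, cB i = - cA i) ->
  connected2 (self_affine A
    (digit_set (fun i => vadd (vscale (cA i) (mapply A v)) (vscale (dd i) v)) m)) ->
  connected2 (self_affine B
    (digit_set (fun i => vadd (vscale (cB i) (mapply B w)) (vscale (dd i) w)) m)).
Proof.
  intros HeA HeB HcA HcB HiA HiB HcAB Hconn.
  destruct (inverse_contraction A p q v HeA HcA HiA) as [HdA [K [r HK]]].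
  destruct (inverse_contraction B (- p) q w HeB HcB HiB) as [HdB [K' [r' HK']]].
  pose proof (lin_indep_vdet _ _ HiA) as Hd.
  set (L := basis_change v (mapply A v) w (vscale (-1) (mapply B w))).
  assert (HL : linear L) by apply basis_change_linear.
  assert (Anti : forall u, L (minv_apply A u) = vscale (-1) (minv_apply B (L u))).
  { intros u. rewrite <- (mapply_minv_apply A u HdA) at 2.
    unfold L; rewrite (basis_change_anti_conj A B p q v w) by auto. fold L.
    rewrite (proj2 (minv_apply_linear B)), minv_apply_mapply by auto.
    apply vec_eq; simpl; ring. }
  assert (Hinj : forall u u', minv_apply A u = minv_apply A u' -> u = u').
  { intros u u' E. rewrite <- (mapply_minv_apply A u HdA), <- (mapply_minv_apply A u' HdA), E.
    reflexivity. }
  set (fA := fun i => vadd (vscale (cA i) (mapply A v)) (vscale (dd i) v)).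
  set (fB := fun i => vadd (vscale (cB i) (mapply B w)) (vscale (dd i) w)).
  assert (Ldigits : forall i, L (fA i) = fB i).
  { intros i. unfold L, fA, fB. rewrite basis_change_combination, HcAB by auto.
    apply vec_eq; simpl; ring. }
  pose proof (connected_transfer (minv_apply A) (minv_apply B) L K r K' r' fA m
                (minv_apply_linear A) (minv_apply_linear B) HL HK HK' Hinj Anti) as Transfer.
  apply (connected2_ext (attractor (minv_apply B) (fun i => L (fA i)) m)).
  - intros x. rewrite self_affine_attractor. apply attractor_digits_ext; auto.
  - apply Transfer. apply (connected2_ext _ _ (fun x => self_affine_attractor A fA m x)); auto.
Qed.

Theorem theorem3p4 (A B : mat2) (p q : Z) (v w : vec) (c d : nat -> Z) :
  expanding A -> expanding B ->
  charpoly_is A p q -> charpoly_is B (- p)%Z q ->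
  v <> vzero -> w <> vzero ->
  lin_indep2 v (mapply A v) -> lin_indep2 w (mapply B w) ->
  (forall i j : nat, (i < Z.abs_nat q)%nat -> (j < Z.abs_nat q)%nat -> i <> j ->
     vadd (vscale (IZR (c i)) (mapply A v)) (vscale (IZR (d i)) v) <>
     vadd (vscale (IZR (c j)) (mapply A v)) (vscale (IZR (d j)) v)) ->
  let D := fun x : vec => exists i : nat, (i < Z.abs_nat q)%nat /\
             x = vadd (vscale (IZR (c i)) (mapply A v)) (vscale (IZR (d i)) v) in
  let D' := fun x : vec => exists i : nat, (i < Z.abs_nat q)%nat /\
             x = vadd (vscale (- IZR (c i)) (mapply B w)) (vscale (IZR (d i)) w) in
  connected2 (self_affine A D) <-> connected2 (self_affine B D').
Proof.
  intros HeA HeB HcA HcB _ _ HiA HiB _ D D'. split.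
  - apply (connected_one_direction A B p q v w (fun i => IZR (c i)) (fun i => - IZR (c i))
             (fun i => IZR (d i))); auto.
  - apply (connected_one_direction B A (- p) q w v (fun i => - IZR (c i)) (fun i => IZR (c i))
             (fun i => IZR (d i))); auto.
    + rewrite Z.opp_involutive; auto.
    + intros; ring.
Qed.
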